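(* The category of partial magmas (with partial magma homomorphisms) is a regular category.
   Context: A partial magma is a set $A$ with a distinguished element $0$, a subset $A_2\subseteq A\times A$ of summable pairs and a map $+\colon A_2\to A$, such that $(0,a),(a,0)\in A_2$ and $a+0=0+a=a$ for all $a$, and $(a,b)\in A_2$ implies $(b,a)\in A_2$ and $a+b=b+a$. A homomorphism $f\colon A\to B$ of partial magmas is a map with $f(0)=0$, $(f\times f)(A_2)\subseteq B_2$ and $f(a_1+a_2)=f(a_1)+f(a_2)$ for all $(a_1,a_2)\in A_2$. A category is regular if it has finite limits, coequalizers of kernel pairs, and regular epimorphisms are stable under pullback. *)

From Stdlib Require Import ProofIrrelevance.

Record Category := {
  ob :> Type;
  hom : ob -> ob -> Type;
  idm : forall A, hom A A;
  comp : forall A B C, hom B C -> hom A B -> hom A C;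
  comp_id_l : forall A B (f : hom A B), comp A B B (idm B) f = f;
  comp_id_r : forall A B (f : hom A B), comp A A B f (idm A) = f;
  comp_assoc : forall A B C D (h : hom C D) (g : hom B C) (f : hom A B),
      comp A C D h (comp A B C g f) = comp A B D (comp B C D h g) f
}.
Arguments hom {c} A B.
Arguments idm {c} A.
Arguments comp {c A B C} g f.

Section CatNotions.
Variable C : Category.

Definition is_terminal (T : C) : Prop :=
  forall X : C, exists f : hom X T, forall g : hom X T, g = f.

Definition is_product (A B P : C) (p1 : hom P A) (p2 : hom P B) : Prop :=
  forall (X : C) (x1 : hom X A) (x2 : hom X B),
    exists! u : hom X P, comp p1 u = x1 /\ comp p2 u = x2.

Definition is_equalizer (A B : C) (f g : hom A B) (E : C) (e : hom E A) : Prop :=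
  comp f e = comp g e /\
  forall (X : C) (x : hom X A), comp f x = comp g x ->
    exists! u : hom X E, comp e u = x.

Definition is_pullback (A B Z : C) (f : hom A Z) (g : hom B Z)
    (P : C) (p1 : hom P A) (p2 : hom P B) : Prop :=
  comp f p1 = comp g p2 /\
  forall (X : C) (x1 : hom X A) (x2 : hom X B), comp f x1 = comp g x2 ->
    exists! u : hom X P, comp p1 u = x1 /\ comp p2 u = x2.

Definition is_coequalizer (A B : C) (u v : hom A B) (Q : C) (q : hom B Q) : Prop :=
  comp q u = comp q v /\
  forall (X : C) (x : hom B X), comp x u = comp x v ->
    exists! w : hom Q X, comp w q = x.

Definition has_finite_limits : Prop :=
  (exists T : C, is_terminal T) /\
  (forall A B : C, exists (P : C) (p1 : hom P A) (p2 : hom P B), is_product A B P p1 p2) /\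
  (forall (A B : C) (f g : hom A B), exists (E : C) (e : hom E A), is_equalizer A B f g E e).

Definition has_pullbacks : Prop :=
  forall (A B Z : C) (f : hom A Z) (g : hom B Z),
    exists (P : C) (p1 : hom P A) (p2 : hom P B), is_pullback A B Z f g P p1 p2.

Definition has_coeq_of_kernel_pairs : Prop :=
  forall (A B : C) (f : hom A B) (K : C) (k1 k2 : hom K A),
    is_pullback A A B f f K k1 k2 ->
    exists (Q : C) (q : hom A Q), is_coequalizer K A k1 k2 Q q.

Definition is_regular_epi (B Q : C) (q : hom B Q) : Prop :=
  exists (A : C) (u v : hom A B), is_coequalizer A B u v Q q.

Definition regular_epis_pullback_stable : Prop :=
  forall (A B Z : C) (f : hom A Z) (g : hom B Z) (P : C) (p1 : hom P A) (p2 : hom P B),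
    is_regular_epi A Z f -> is_pullback A B Z f g P p1 p2 ->
    is_regular_epi P B p2.

Definition is_regular_category : Prop :=
  has_finite_limits /\ has_pullbacks /\ has_coeq_of_kernel_pairs /\
  regular_epis_pullback_stable.

End CatNotions.

(** The partial addition is encoded as [padd : A -> A -> option A]:
    (a,b) is summable iff [padd a b <> None], and then a+b is the value. *)
Record PMagma := {
  pm_car :> Type;
  pm_zero : pm_car;
  padd : pm_car -> pm_car -> option pm_car;
  padd_0l : forall a, padd pm_zero a = Some a;
  padd_0r : forall a, padd a pm_zero = Some a;
  padd_comm : forall a b, padd a b = padd b a
}.

Definition summable (A : PMagma) (a b : A) : Prop := padd A a b <> None.

Record PMHom (A B : PMagma) := {
  pmh_fun :> A -> B;
  pmh_zero : pmh_fun (pm_zero A) = pm_zero B;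
  pmh_add : forall a1 a2 s, padd A a1 a2 = Some s ->
      padd B (pmh_fun a1) (pmh_fun a2) = Some (pmh_fun s)
}.
Arguments pmh_fun {A B} p _.

Definition pmh_id (A : PMagma) : PMHom A A.
Proof. refine {| pmh_fun := fun x => x |}; auto. Defined.

Definition pmh_comp (A B D : PMagma) (g : PMHom B D) (f : PMHom A B) : PMHom A D.
Proof.
  refine {| pmh_fun := fun x => g (f x) |}.
  - rewrite (pmh_zero _ _ f); apply pmh_zero.
  - intros a1 a2 s H. apply (pmh_add _ _ g). apply (pmh_add _ _ f). exact H.
Defined.

Lemma pmh_eq (A B : PMagma) (f g : PMHom A B) :
  pmh_fun f = pmh_fun g -> f = g.
Proof.
  destruct f as [f f0 fa], g as [g g0 ga]; simpl; intros ->.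
  rewrite (proof_irrelevance _ f0 g0), (proof_irrelevance _ fa ga). reflexivity.
Qed.

Definition PMagCat : Category.
Proof.
  refine {| ob := PMagma; hom := PMHom; idm := pmh_id; comp := pmh_comp |};
  intros; apply pmh_eq; reflexivity.
Defined.

From Stdlib Require Import ProofIrrelevance FunctionalExtensionality ClassicalEpsilon.

(* Finite limits are computed on underlying sets: products carry the
   componentwise sum, equalizers and pullbacks are subsets with the restricted
   sum.  A morphism q : A -> Q is a regular epimorphism exactly when it is onto
   and every summable pair of Q is the image of a summable pair of A.  The
   coequalizer of the kernel pair of f is f corestricted to its image, where
   two elements are summable iff they are images of a summable pair; and both
   conditions on q transfer to its pullbacks because the elements and sums of
   a pullback are pairs of compatible elements and sums. *)

Local Notation "g ∘ f" := (@comp PMagCat _ _ _ g f) (at level 40, left associativity).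

Lemma sig_ext {T : Type} {P : T -> Prop} (x y : {a | P a}) :
  proj1_sig x = proj1_sig y -> x = y.
Proof. apply eq_sig_hprop; intros; apply proof_irrelevance. Qed.

Lemma option_ext {T : Type} (o1 o2 : option T) :
  (forall s, o1 = Some s <-> o2 = Some s) -> o1 = o2.
Proof.
  destruct o1 as [s1|], o2 as [s2|]; intro H; auto.
  - apply H; reflexivity.
  - discriminate (proj1 (H s1) eq_refl).
  - discriminate (proj2 (H s2) eq_refl).
Qed.

Lemma pmhom_ext {A B : PMagma} (f g : PMHom A B) : (forall x, f x = g x) -> f = g.
Proof. intro H; apply pmh_eq, functional_extensionality, H. Qed.

Lemma pmhom_congr {A B : PMagma} {f g : PMHom A B} : f = g -> forall x, f x = g x.
Proof. now intros ->. Qed.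

Section CategoryFacts.
Variable C : Category.

Lemma product_equalizer_pullback (A B Z P E : C) (f : hom A Z) (g : hom B Z)
    (p1 : hom P A) (p2 : hom P B) (e : hom E P) :
  is_product C A B P p1 p2 -> is_equalizer C P Z (comp f p1) (comp g p2) E e ->
  is_pullback C A B Z f g E (comp p1 e) (comp p2 e).
Proof.
  intros Hprod [He Heq]. split.
  - now rewrite !comp_assoc.
  - intros X x1 x2 Hx.
    destruct (Hprod X x1 x2) as [u [[Hu1 Hu2] Hu]].
    assert (Hfu : comp (comp f p1) u = comp (comp g p2) u)
      by now rewrite <- !comp_assoc, Hu1, Hu2.
    destruct (Heq X u Hfu) as [v [Hv Hv_uniq]].
    exists v. split.
    + now rewrite <- !comp_assoc, Hv.
    + intros v' [H1 H2]. apply Hv_uniq. symmetry. apply Hu.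
      now rewrite !comp_assoc.
Qed.

Lemma coequalizer_epi (A B Q X : C) (u v : hom A B) (q : hom B Q) (h k : hom Q X) :
  is_coequalizer C A B u v Q q -> comp h q = comp k q -> h = k.
Proof.
  intros [Hq Huniv] Hhk.
  assert (Hx : comp (comp h q) u = comp (comp h q) v)
    by now rewrite <- !comp_assoc, Hq.
  destruct (Huniv X (comp h q) Hx) as [w [_ Hw]].
  transitivity w; [symmetry |]; apply Hw; auto.
Qed.

End CategoryFacts.

Section SubMagma.
Variables (A : PMagma) (S : A -> Prop) (R : A -> A -> Prop).

(* [R] selects which ambient sums of elements of [S] remain defined. *)
Definition sub_padd (x y : {a : A | S a}) : option {a : A | S a} :=
  match padd A (proj1_sig x) (proj1_sig y) with
  | Some s =>
      match excluded_middle_informative (S s /\ R (proj1_sig x) (proj1_sig y)) with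
      | left H => Some (exist _ s (proj1 H))
      | right _ => None
      end
  | None => None
  end.

Lemma sub_padd_Some x y s :
  sub_padd x y = Some s <->
  R (proj1_sig x) (proj1_sig y) /\ padd A (proj1_sig x) (proj1_sig y) = Some (proj1_sig s).
Proof.
  unfold sub_padd. split.
  - destruct (padd A _ _) as [s0|]; [|discriminate].
    destruct excluded_middle_informative as [H|]; [|discriminate].
    intro E; injection E as <-. split; [apply H | reflexivity].
  - intros [HR ->].
    destruct excluded_middle_informative as [H|H].
    + f_equal; apply sig_ext; reflexivity.
    + exfalso; apply H; split; [apply proj2_sig | exact HR].
Qed.

Hypotheses (S0 : S (pm_zero A)) (R0 : forall a, S a -> R (pm_zero A) a)
  (Rsym : forall a b, R a b -> R b a).

Definition subPM : PMagma.
Proof.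
  refine {| pm_car := {a : A | S a}; pm_zero := exist _ (pm_zero A) S0;
            padd := sub_padd |}.
  - intro a. apply sub_padd_Some; split; [apply R0, proj2_sig | apply padd_0l].
  - intro a. apply sub_padd_Some; split; [apply Rsym, R0, proj2_sig | apply padd_0r].
  - intros a b. apply option_ext. intro s. rewrite !sub_padd_Some, padd_comm.
    split; intros [HR Hs]; auto.
Defined.

Definition sub_incl : PMHom subPM A.
Proof.
  refine {| pmh_fun := fun x : subPM => proj1_sig x |}.
  - reflexivity.
  - intros a1 a2 s H. apply sub_padd_Some in H. apply H.
Defined.

Definition sub_lift (X : PMagma) (h : PMHom X A) (HS : forall x, S (h x))
  (HR : forall x1 x2 s, padd X x1 x2 = Some s -> R (h x1) (h x2)) : PMHom X subPM.
Proof.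
  refine {| pmh_fun := fun x => (exist _ (h x) (HS x) : subPM) |}.
  - apply sig_ext, pmh_zero.
  - intros a1 a2 s H. apply sub_padd_Some; split.
    + exact (HR _ _ _ H).
    + exact (pmh_add _ _ h _ _ _ H).
Defined.

End SubMagma.

Arguments sub_incl {A S R S0 R0 Rsym}.

Definition unitPM : PMagma.
Proof.
  refine {| pm_car := unit; pm_zero := tt; padd := fun _ _ => Some tt |};
  intros []; reflexivity.
Defined.

Lemma unitPM_terminal : is_terminal PMagCat unitPM.
Proof.
  intro X.
  exists {| pmh_fun := fun _ : X => tt : unitPM;
            pmh_zero := eq_refl; pmh_add := fun _ _ _ _ => eq_refl |}.
  intro g. apply pmhom_ext. intro x. now destruct (g x).
Qed.

Section Product.
Variables A B : PMagma.

Definition prod_padd (p q : A * B) : option (A * B) :=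
  match padd A (fst p) (fst q), padd B (snd p) (snd q) with
  | Some s, Some t => Some (s, t)
  | _, _ => None
  end.

Lemma prod_padd_Some p q s :
  prod_padd p q = Some s <->
  padd A (fst p) (fst q) = Some (fst s) /\ padd B (snd p) (snd q) = Some (snd s).
Proof.
  unfold prod_padd. destruct s as [s t].
  destruct (padd A _ _), (padd B _ _); simpl; split;
    try discriminate; try (intros [? ?]; discriminate).
  - intro E; injection E as -> ->; auto.
  - intros [E1 E2]; injection E1 as ->; injection E2 as ->; reflexivity.
Qed.

Definition prodPM : PMagma.
Proof.
  refine {| pm_car := (A * B)%type; pm_zero := (pm_zero A, pm_zero B);
            padd := prod_padd |};
    unfold prod_padd.
  - intros [a b]; simpl; now rewrite !padd_0l.
  - intros [a b]; simpl; now rewrite !padd_0r.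
  - intros [a b] [c d]; simpl; now rewrite (padd_comm A a), (padd_comm B b).
Defined.

Definition pr1 : PMHom prodPM A.
Proof.
  refine {| pmh_fun := fun p : prodPM => fst p |}; [reflexivity|].
  intros p q s H; apply prod_padd_Some in H; apply H.
Defined.

Definition pr2 : PMHom prodPM B.
Proof.
  refine {| pmh_fun := fun p : prodPM => snd p |}; [reflexivity|].
  intros p q s H; apply prod_padd_Some in H; apply H.
Defined.

Definition pair_hom (X : PMagma) (f : PMHom X A) (g : PMHom X B) : PMHom X prodPM.
Proof.
  refine {| pmh_fun := fun x => (f x, g x) : prodPM |}.
  - simpl; now rewrite !pmh_zero.
  - intros x y s H; apply prod_padd_Some; split; apply pmh_add, H.
Defined.

Lemma prodPM_product : is_product PMagCat A B prodPM pr1 pr2.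
Proof.
  intros X x1 x2. exists (pair_hom X x1 x2). split.
  - split; apply pmhom_ext; reflexivity.
  - intros u [<- <-]. apply pmhom_ext; intro x. simpl. now destruct (u x).
Qed.

End Product.

Section Equalizer.
Variables (A B : PMagma) (f g : PMHom A B).

Definition eqPM : PMagma.
Proof.
  refine (subPM A (fun a => f a = g a) (fun _ _ => True) _ _ _); auto.
  now rewrite !pmh_zero.
Defined.

Definition eq_incl : PMHom eqPM A := sub_incl.

Lemma eqPM_equalizer : is_equalizer PMagCat A B f g eqPM eq_incl.
Proof.
  split.
  - apply pmhom_ext; intro x. apply (proj2_sig x).
  - intros X x Hx.
    exists (sub_lift _ _ _ _ _ _ X x (pmhom_congr Hx) (fun _ _ _ _ => I)). split.
    + apply pmhom_ext; reflexivity.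
    + intros u <-. apply pmhom_ext; intro y. now apply sig_ext.
Qed.

End Equalizer.

Section Pullback.
Variables (A B Z : PMagma) (f : PMHom A Z) (g : PMHom B Z).

Definition pbPM : PMagma := eqPM (prodPM A B) Z (f ∘ pr1 A B) (g ∘ pr2 A B).
Definition pb1 : PMHom pbPM A := pr1 A B ∘ eq_incl _ _ _ _.
Definition pb2 : PMHom pbPM B := pr2 A B ∘ eq_incl _ _ _ _.

Lemma pbPM_pullback : is_pullback PMagCat A B Z f g pbPM pb1 pb2.
Proof.
  apply product_equalizer_pullback; [apply prodPM_product | apply eqPM_equalizer].
Qed.

Definition pb_pair (a : A) (b : B) (E : f a = g b) : pbPM := exist _ (a, b) E.

Lemma pb_pair_padd a1 b1 E1 a2 b2 E2 t s Et :
  padd A a1 a2 = Some t -> padd B b1 b2 = Some s ->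
  padd pbPM (pb_pair a1 b1 E1) (pb_pair a2 b2 E2) = Some (pb_pair t s Et).
Proof.
  intros Ha Hb. apply sub_padd_Some; split; [exact I|].
  now apply prod_padd_Some.
Qed.

Variables (P : PMagma) (p1 : PMHom P A) (p2 : PMHom P B).
Hypothesis Hpb : is_pullback PMagCat A B Z f g P p1 p2.

Lemma pullback_mediator :
  exists phi : PMHom pbPM P,
    forall c, p1 (phi c) = fst (proj1_sig c) /\ p2 (phi c) = snd (proj1_sig c).
Proof.
  destruct Hpb as [_ Huniv].
  destruct (Huniv pbPM pb1 pb2 (proj1 pbPM_pullback)) as [phi [[E1 E2] _]].
  exists phi. intro c. exact (conj (pmhom_congr E1 c) (pmhom_congr E2 c)).
Qed.

Lemma pullback_elements a b : f a = g b -> exists p, p1 p = a /\ p2 p = b.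
Proof.
  intro E. destruct pullback_mediator as [phi Hphi].
  exists (phi (pb_pair a b E)). apply Hphi.
Qed.

End Pullback.

Section Image.
Variables (A B : PMagma) (f : PMHom A B).

Definition in_image (b : B) : Prop := exists a, f a = b.

Definition image_summable (x y : B) : Prop :=
  exists a1 a2 t, f a1 = x /\ f a2 = y /\ padd A a1 a2 = Some t.

Definition imPM : PMagma.
Proof.
  refine (subPM B in_image image_summable _ _ _).
  - exists (pm_zero A); apply pmh_zero.
  - intros b [a <-]. exists (pm_zero A), a, a.
    repeat split; [apply pmh_zero | apply padd_0l].
  - intros x y (a1 & a2 & t & H1 & H2 & H3). exists a2, a1, t.
    rewrite padd_comm; auto.
Defined.

Definition im_corestr : PMHom A imPM.
Proof.
  refine (sub_lift _ _ _ _ _ _ A f (fun a => ex_intro _ a eq_refl) _).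
  intros a1 a2 s H. exists a1, a2, s; auto.
Defined.

Definition im_incl : PMHom imPM B := sub_incl.

Definition quotient_map : Prop :=
  (forall b, in_image b) /\
  (forall y1 y2 s, padd B y1 y2 = Some s -> image_summable y1 y2).

End Image.

Arguments in_image {A B} f b.
Arguments image_summable {A B} f x y.
Arguments imPM {A B} f.
Arguments im_corestr {A B} f.
Arguments im_incl {A B} f.
Arguments quotient_map {A B} f.

Lemma im_corestr_quotient_map (A B : PMagma) (f : PMHom A B) :
  quotient_map (im_corestr f).
Proof.
  split.
  - intros [b [a Ha]]. exists a. now apply sig_ext.
  - intros y1 y2 s H. apply sub_padd_Some in H.
    destruct H as [(a1 & a2 & t & H1 & H2 & H3) _].
    exists a1, a2, t. repeat split; auto; now apply sig_ext.
Qed.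

Lemma quotient_map_factor (A Q X : PMagma) (q : PMHom A Q) (x : PMHom A X) :
  quotient_map q -> (forall a a', q a = q a' -> x a = x a') ->
  exists! w : PMHom Q X, w ∘ q = x.
Proof.
  intros [Hsurj Hsum] Hx.
  destruct (choice (fun y a => q a = y) Hsurj) as [pre Hpre].
  assert (Hxpre : forall a, x (pre (q a)) = x a) by (intro; apply Hx, Hpre).
  assert (W0 : x (pre (pm_zero Q)) = pm_zero X).
  { rewrite <- (pmh_zero _ _ q), Hxpre. apply pmh_zero. }
  assert (Wadd : forall y1 y2 s, padd Q y1 y2 = Some s ->
            padd X (x (pre y1)) (x (pre y2)) = Some (x (pre s))).
  { intros y1 y2 s H. destruct (Hsum _ _ _ H) as (a1 & a2 & t & <- & <- & Ht).
    pose proof (pmh_add _ _ q _ _ _ Ht) as Hq. rewrite H in Hq.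
    injection Hq as ->. rewrite !Hxpre. apply pmh_add, Ht. }
  exists (Build_PMHom Q X (fun y => x (pre y)) W0 Wadd). split.
  - apply pmhom_ext, Hxpre.
  - intros w <-. apply pmhom_ext; intro y. simpl. now rewrite Hpre.
Qed.

Lemma kernel_pair_coequalizer (A B Q K : PMagma) (f : PMHom A B)
    (k1 k2 : PMHom K A) (q : PMHom A Q) :
  is_pullback PMagCat A A B f f K k1 k2 -> quotient_map q ->
  (forall a a', q a = q a' <-> f a = f a') ->
  is_coequalizer PMagCat K A k1 k2 Q q.
Proof.
  intros Hpb Hq Hker. split.
  - apply pmhom_ext; intro k. apply Hker, (pmhom_congr (proj1 Hpb) k).
  - intros X x Hx. apply quotient_map_factor; [exact Hq|].
    intros a a' E. apply Hker in E.
    destruct (pullback_elements _ _ _ _ _ _ _ _ Hpb _ _ E) as [k [<- <-]].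
    exact (pmhom_congr Hx k).
Qed.

Lemma quotient_map_regular_epi (A Q : PMagma) (q : PMHom A Q) :
  quotient_map q -> is_regular_epi PMagCat A Q q.
Proof.
  intro Hq. exists (pbPM A A Q q q), (pb1 A A Q q q), (pb2 A A Q q q).
  apply (kernel_pair_coequalizer _ _ _ _ q); [apply pbPM_pullback | exact Hq | reflexivity].
Qed.

Lemma regular_epi_quotient_map (A Q : PMagma) (q : PMHom A Q) :
  is_regular_epi PMagCat A Q q -> quotient_map q.
Proof.
  intros (K & u & v & Hcoeq).
  assert (Hcu : im_corestr q ∘ u = im_corestr q ∘ v).
  { apply pmhom_ext; intro k. apply sig_ext, (pmhom_congr (proj1 Hcoeq) k). }
  destruct (proj2 Hcoeq _ _ Hcu) as [w [Hw _]].
  (* [im_incl q ∘ w] and the identity agree after [q], hence everywhere. *)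
  assert (Hsec : forall y, proj1_sig (w y) = y).
  { apply (@pmhom_congr _ _ (im_incl q ∘ w) (@idm PMagCat Q)).
    apply (coequalizer_epi _ _ _ _ _ _ _ _ _ _ Hcoeq).
    apply pmhom_ext; intro a. exact (f_equal (@proj1_sig _ _) (pmhom_congr Hw a)). }
  split.
  - intro y. rewrite <- Hsec. exact (proj2_sig (w y)).
  - intros y1 y2 s H. rewrite <- (Hsec y1), <- (Hsec y2).
    exact (proj1 (proj1 (sub_padd_Some _ _ _ _ _ _) (pmh_add _ _ w _ _ _ H))).
Qed.

Lemma quotient_map_pullback (A B Z P : PMagma) (f : PMHom A Z) (g : PMHom B Z)
    (p1 : PMHom P A) (p2 : PMHom P B) :
  is_pullback PMagCat A B Z f g P p1 p2 -> quotient_map f -> quotient_map p2.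
Proof.
  intros Hpb [Hsurj Hsum].
  destruct (pullback_mediator _ _ _ _ _ _ _ _ Hpb) as [phi Hphi].
  split.
  - intro b. destruct (Hsurj (g b)) as [a Ha].
    exists (phi (pb_pair _ _ _ _ _ a b Ha)). apply Hphi.
  - intros b1 b2 s H.
    pose proof (pmh_add _ _ g _ _ _ H) as Hg.
    destruct (Hsum _ _ _ Hg) as (a1 & a2 & t & H1 & H2 & Ht).
    assert (Hts : f t = g s).
    { pose proof (pmh_add _ _ f _ _ _ Ht) as Hf. rewrite H1, H2, Hg in Hf.
      now injection Hf. }
    exists (phi (pb_pair _ _ _ _ _ a1 b1 H1)), (phi (pb_pair _ _ _ _ _ a2 b2 H2)),
      (phi (pb_pair _ _ _ _ _ t s Hts)).
    repeat split; try apply Hphi.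
    apply pmh_add, pb_pair_padd; assumption.
Qed.

Theorem mainTheorem2 : is_regular_category PMagCat.
Proof.
  split; [|split; [|split]].
  - split; [|split].
    + exists unitPM; apply unitPM_terminal.
    + intros A B. exists (prodPM A B), (pr1 A B), (pr2 A B). apply prodPM_product.
    + intros A B f g. exists (eqPM A B f g), (eq_incl A B f g). apply eqPM_equalizer.
  - intros A B Z f g. exists (pbPM A B Z f g), (pb1 A B Z f g), (pb2 A B Z f g).
    apply pbPM_pullback.
  - intros A B f K k1 k2 Hpb. exists (imPM f), (im_corestr f).
    apply (kernel_pair_coequalizer _ _ _ _ f); [exact Hpb | apply im_corestr_quotient_map |].
    intros a a'. split; intro E; [exact (f_equal (@proj1_sig _ _) E) | exact (sig_ext (im_corestr f a) (im_corestr f a') E)].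
  - intros A B Z f g P p1 p2 Hf Hpb.
    apply quotient_map_regular_epi, (quotient_map_pullback _ _ _ _ f g p1 p2 Hpb).
    apply regular_epi_quotient_map, Hf.
Qed.
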